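(* If $2^{a_1}3^{a_2}5^{a_3}\cdots=\prod_i p_i^{a_i}$ is a reduced integer, then $a_2\ge a_3\ge a_4\ge\cdots$.
   Context: Let $p_i$ denote the $i$-th prime ($p_1=2$). A positive integer $\prod_i p_i^{a_i}$ (with $a_i=0$ for all sufficiently large $i$) is called reduced if $\left\lfloor\frac{a_i+1}{a_j+2}\right\rfloor<\frac{\log p_j}{\log p_i}$ for all $i,j\ne 1$, and $2^{a_1}<8p_j^2$ for every $j$ with $a_j=0$. *)

From Stdlib Require Import Reals.
From mathcomp Require Import all_boot.

Set Implicit Arguments.
Unset Strict Implicit.
Unset Printing Implicit Defensive.

Lemma next_prime_ex (m : nat) : exists p, (m < p) && prime p.
Proof. by have [p lt_mp pr_p] := prime_above m; exists p; rewrite lt_mp pr_p. Qed.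

Definition next_prime (m : nat) : nat := ex_minn (next_prime_ex m).

Fixpoint prime0 (k : nat) : nat :=
  if k is k'.+1 then next_prime (prime0 k') else 2.

(* p_i, the i-th prime, 1-indexed: p 1 = 2, p 2 = 3, ... *)
Definition p (i : nat) : nat := prime0 i.-1.

Definition a (n i : nat) : nat := logn (p i) n.

Definition reduced (n : nat) : Prop :=
  0 < n /\
  (forall i j : nat, 2 <= i -> 2 <= j ->
     Rlt (INR ((a n i).+1 %/ (a n j).+2))
         (Rdiv (ln (INR (p j))) (ln (INR (p i))))) /\
  (forall j : nat, 1 <= j -> a n j = 0 -> 2 ^ (a n 1) < 8 * (p j) ^ 2).

(* Since p_(i+1) > p_i > 1, the ratio log p_i / log p_(i+1) is below 1, so the
   reducedness condition for the pair (i+1, i) forces the floor of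
   (a_(i+1) + 1) / (a_i + 2) to vanish, i.e. a_(i+1) + 1 < a_i + 2. *)
From Stdlib Require Import Reals Lra.
From mathcomp Require Import all_boot.

Set Implicit Arguments.
Unset Strict Implicit.
Unset Printing Implicit Defensive.

Lemma next_prime_gt (m : nat) : m < next_prime m.
Proof. by rewrite /next_prime; case: ex_minnP => q /andP []. Qed.

Lemma prime0_gt1 (k : nat) : 1 < prime0 k.
Proof. by elim: k => //= k IHk; apply: leq_trans IHk (ltnW (next_prime_gt _)). Qed.

Lemma p_ltS (i : nat) : 0 < i -> p i < p i.+1.
Proof. by case: i => // i _; apply: next_prime_gt. Qed.

Lemma ln_ratio_lt1 (x y : R) : Rlt 1 x -> Rlt x y -> Rlt (ln x / ln y) 1.
Proof.
move=> gt1_x lt_xy.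
have ln_x_gt0 : Rlt 0 (ln x) by rewrite -ln_1; apply: ln_increasing; lra.
have ln_lt : Rlt (ln x) (ln y) by apply: ln_increasing; lra.
apply: (Rmult_lt_reg_r (ln y)); first lra.
by rewrite Rmult_1_l /Rdiv Rmult_assoc Rinv_l; lra.
Qed.

Lemma reduced_divn_succ_eq0 (n i : nat) :
  reduced n -> 2 <= i -> (a n i.+1).+1 %/ (a n i).+2 = 0.
Proof.
move=> [_ [red _]] le2i.
have lt_floor := red i.+1 i (leqW le2i) le2i.
have gt1_p : 1 < p i := prime0_gt1 i.-1.
have lt_p : p i < p i.+1 by apply: p_ltS; apply: leq_trans le2i.
have lt_ratio1 := ln_ratio_lt1 (lt_1_INR _ (ltP gt1_p)) (lt_INR _ _ (ltP lt_p)).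
have /INR_lt/ltP : Rlt (INR ((a n i.+1).+1 %/ (a n i).+2)) (INR 1) by simpl; lra.
by rewrite ltnS leqn0 => /eqP.
Qed.

Theorem lemma3p11 (n : nat) :
  reduced n -> forall i : nat, 2 <= i -> a n i.+1 <= a n i.
Proof.
move=> red i le2i.
have := reduced_divn_succ_eq0 red le2i.
by move/eqP; rewrite -leqn0 leqNgt divn_gt0 // ltnS -ltnNge.
Qed.
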